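(* Let $(\Omega,+)$ be a group and $x,a,y,b,z$ subgroups of $\Omega$. Then: (1) $\Gamma(x,a,x,b,z)=\big((x\wedge a)+z\big)\wedge(x+b)=(x\wedge a)+\big(z\wedge(x+b)\big)$; (2) $\Gamma(x,a,y,b,a)=\Big(\big(x\wedge(a+y)\big)+b\Big)\wedge a=\Big(x+\big((y+a)\wedge b\big)\Big)\wedge a$; (3) $\Gamma(x,a,y,b,b)=\Big(\big(a+(y\wedge b)\big)\wedge x\Big)+b=\Big(a\wedge\big(x+(y\wedge b)\big)\Big)+b$. In particular, for all subgroups $x,a,y,b$: $\Gamma(x,a,x,b,x)=x$, $\Gamma(a,a,y,b,b)=a+b$ and $\Gamma(b,a,y,b,a)=a\wedge b$.
   Context: $(\Omega,+)$ is a group written additively but not necessarily abelian. For subsets $u,v$: $u\wedge v:=u\cap v$ and $u+v:=\{\mu+\nu:\mu\in u,\nu\in v\}$. $\Gamma(x,a,y,b,z)=\{\omega\in\Omega:\exists\alpha\in a,\beta\in b:\ \alpha+\omega+\beta\in y,\ \alpha+\omega\in z,\ \omega+\beta\in x\}$. *)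

(* A (not necessarily abelian, possibly infinite) group written
   additively, given as a record of carrier, operations and group axioms. *)
Set Implicit Arguments.

Record Group := {
  carrier :> Type;
  gadd : carrier -> carrier -> carrier;
  gzero : carrier;
  gopp : carrier -> carrier;
  gaddA : forall x y z, gadd x (gadd y z) = gadd (gadd x y) z;
  gadd0l : forall x, gadd gzero x = x;
  gadd0r : forall x, gadd x gzero = x;
  gaddNl : forall x, gadd (gopp x) x = gzero;
  gaddNr : forall x, gadd x (gopp x) = gzero
}.

Definition gset (G : Group) := G -> Prop.

Definition is_subgroup (G : Group) (H : gset G) : Prop :=
  H (gzero G) /\
  (forall u v, H u -> H v -> H (gadd G u v)) /\
  (forall u, H u -> H (gopp G u)).

Definition smeet (G : Group) (u v : gset G) : gset G := fun w => u w /\ v w.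

Definition ssum (G : Group) (u v : gset G) : gset G :=
  fun w => exists mu nu, u mu /\ v nu /\ w = gadd G mu nu.

Definition seq_set (G : Group) (u v : gset G) : Prop := forall w, u w <-> v w.

Definition Gamma (G : Group) (x a y b z : gset G) : gset G :=
  fun w => exists alpha beta, a alpha /\ b beta /\
    y (gadd G (gadd G alpha w) beta) /\ z (gadd G alpha w) /\ x (gadd G w beta).

(** Every equality is proved by rewriting a witness of one side into a witness
    of the other: if [alpha + w + beta], [alpha + w] and [w + beta] lie in the
    prescribed subgroups, then [w] is recovered as [- alpha + (alpha + w)] or
    as [(w + beta) + - beta], and conversely a decomposition of [w] as a sum
    yields [alpha] and [beta] as the inverses of its outer summands.  The
    particular cases follow from (1)-(3) by absorption, e.g.
    [Gamma(x,a,x,b,x) = ((x /\ a) + x) /\ (x + b) = x /\ (x + b) = x]. *)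
From Stdlib Require Import Setoid Morphisms.

Section GroupLaws.
Context {G : Group}.
Local Notation "u + v" := (gadd G u v).
Local Notation "- u" := (gopp G u).

Lemma gopp_opp (u : G) : - - u = u.
Proof.
  transitivity (- - u + (- u + u)).
  - rewrite gaddNl, gadd0r; reflexivity.
  - rewrite gaddA, gaddNl, gadd0l; reflexivity.
Qed.

Lemma gaddKN (u v : G) : u + v + - v = u.
Proof. rewrite <- gaddA, gaddNr, gadd0r; reflexivity. Qed.

Lemma gopp_add (u v : G) : - (u + v) = - v + - u.
Proof.
  assert (Hinv : (u + v) + (- v + - u) = gzero G).
  { rewrite gaddA, gaddKN, gaddNr; reflexivity. }
  transitivity (- (u + v) + ((u + v) + (- v + - u))).
  - rewrite Hinv, gadd0r; reflexivity.
  - rewrite gaddA, gaddNl, gadd0l; reflexivity.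
Qed.

Lemma gopp0 : - gzero G = gzero G.
Proof. rewrite <- (gadd0l G (- gzero G)); apply gaddNr. Qed.

Lemma gaddNK (u v : G) : u + - v + v = u.
Proof. rewrite <- gaddA, gaddNl, gadd0r; reflexivity. Qed.
End GroupLaws.

Ltac gnorm :=
  repeat (first [ rewrite gaddA | rewrite gopp_add | rewrite gopp_opp | rewrite gopp0
                | rewrite gadd0l | rewrite gadd0r | rewrite gaddNl | rewrite gaddNr
                | rewrite gaddKN | rewrite gaddNK ]);
  reflexivity.

Section Subgroup.
Context {G : Group}.
Variable H : gset G.
Hypothesis sH : is_subgroup H.

Lemma mem0 : H (gzero G).
Proof. apply sH. Qed.

Lemma memD u v : H u -> H v -> H (gadd G u v).
Proof. apply sH. Qed.

Lemma memN u : H u -> H (gopp G u).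
Proof. apply sH. Qed.
End Subgroup.

#[global] Hint Extern 1 =>
  match goal with
  | |- _ (gzero _) => eapply mem0
  | |- _ (gadd _ _ _) => eapply memD
  | |- _ (gopp _ _) => eapply memN
  end : subgroup.

Tactic Notation "mem_as" constr(e) "by" tactic3(tac) :=
  match goal with |- ?P ?t => replace t with e by tac; solve [auto with subgroup] end.
Tactic Notation "mem_as" constr(e) := mem_as e by gnorm.

Section SetAlgebra.
Context {G : Group}.

#[global] Instance seq_set_equiv : Equivalence (@seq_set G).
Proof.
  split.
  - intros u w; reflexivity.
  - intros u v Huv w; symmetry; apply Huv.
  - intros u v t Huv Hvt w; rewrite (Huv w); apply Hvt.
Qed.

#[global] Instance smeet_proper : Proper (@seq_set G ==> @seq_set G ==> @seq_set G) (@smeet G).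
Proof. intros u u' Hu v v' Hv w; unfold smeet; rewrite (Hu w), (Hv w); reflexivity. Qed.

#[global] Instance ssum_proper : Proper (@seq_set G ==> @seq_set G ==> @seq_set G) (@ssum G).
Proof.
  intros u u' Hu v v' Hv w; split; intros (p & q & Hp & Hq & Hw);
    exists p, q; firstorder.
Qed.

Lemma smeet_comm (u v : gset G) : seq_set (smeet u v) (smeet v u).
Proof. intro w; unfold smeet; tauto. Qed.

Lemma smeet_idPl (u v : gset G) : (forall w, u w -> v w) -> seq_set (smeet u v) u.
Proof. intros Huv w; unfold smeet; split; [tauto | auto]. Qed.

Lemma ssum_subl (u v : gset G) w : v (gzero G) -> u w -> ssum u v w.
Proof. intros Hv0 Hu; exists w, (gzero G); rewrite gadd0r; auto. Qed.

Lemma ssum_idPr (u H : gset G) : is_subgroup H ->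
  u (gzero G) -> (forall w, u w -> H w) -> seq_set (ssum u H) H.
Proof.
  intros sH Hu0 HuH w; split.
  - intros (p & q & Hp & Hq & ->); auto with subgroup.
  - intro Hw; exists (gzero G), w; rewrite gadd0l; auto.
Qed.

(* Dedekind's modular law: [S] need only be stable under translation by [p]. *)
Lemma ssum_smeet_modular (p q S : gset G) :
  (forall u v, p u -> (S (gadd G u v) <-> S v)) ->
  seq_set (smeet (ssum p q) S) (ssum p (smeet q S)).
Proof.
  intros HS w; split.
  - intros [(u & v & Hu & Hv & ->) Hw]; exists u, v; repeat split; auto.
    apply (HS u v); assumption.
  - intros (u & v & Hu & [Hv HvS] & ->); split.
    + exists u, v; auto.
    + apply HS; assumption.
Qed.

Lemma ssum_translate_l (H u : gset G) (h v : G) : is_subgroup H -> H h ->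
  (ssum H u (gadd G h v) <-> ssum H u v).
Proof.
  intros sH Hh; split; intros (p & q & Hp & Hq & Hv).
  - exists (gadd G (gopp G h) p), q; repeat split; auto with subgroup.
    rewrite <- gaddA, <- Hv; gnorm.
  - exists (gadd G h p), q; repeat split; auto with subgroup.
    rewrite Hv; gnorm.
Qed.
End SetAlgebra.

#[global] Hint Resolve ssum_subl : subgroup.
#[global] Hint Extern 1 (smeet _ _ _) => split : subgroup.

Section Gamma.
Context {G : Group}.
Variables x a y b z : gset G.
Hypotheses (sx : is_subgroup x) (sa : is_subgroup a) (sy : is_subgroup y)
  (sb : is_subgroup b).
Local Notation "u + v" := (gadd G u v).
Local Notation "- u" := (gopp G u).

Lemma GammaE_y_x : seq_set (Gamma x a x b z) (smeet (ssum (smeet x a) z) (ssum x b)).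
Proof.
  intro w; split.
  - intros (al & be & Ha & Hb & Hy & Hz & Hx).
    (* [al + w + be] and [w + be] both lie in [x]. *)
    assert (Hal : x al) by mem_as (al + w + be + - (w + be)).
    split.
    + exists (- al), (al + w); repeat split; auto with subgroup; gnorm.
    + exists (w + be), (- be); repeat split; auto with subgroup; gnorm.
  - intros [(p & q & [Hpx Hpa] & Hq & Hw1) (r & s & Hr & Hs & Hw2)].
    exists (- p), (- s); repeat split; auto with subgroup.
    + mem_as (- p + r) by (rewrite Hw2; gnorm).
    + mem_as q by (rewrite Hw1; gnorm).
    + mem_as r by (rewrite Hw2; gnorm).
Qed.

Lemma GammaE_z_a : seq_set (Gamma x a y b a) (smeet (ssum (smeet x (ssum a y)) b) a).
Proof.
  intro w; split.
  - intros (al & be & Ha & Hb & Hy & Hz & Hx); split.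
    + exists (w + be), (- be); repeat split; auto with subgroup; [|gnorm].
      exists (- al), (al + w + be); repeat split; auto with subgroup; gnorm.
    + mem_as (- al + (al + w)).
  - intros [(p & s & [Hpx (a1 & y1 & Ha1 & Hy1 & Hp)] & Hs & Hw) Hwa].
    exists (- a1), (- s); repeat split; auto with subgroup.
    + mem_as y1 by (rewrite Hw, Hp; gnorm).
    + mem_as p by (rewrite Hw; gnorm).
Qed.

Lemma GammaE_z_a' : seq_set (Gamma x a y b a) (smeet (ssum x (smeet (ssum y a) b)) a).
Proof.
  intro w; split.
  - intros (al & be & Ha & Hb & Hy & Hz & Hx); split.
    + exists (w + be), (- be); repeat split; auto with subgroup; [|gnorm].
      exists (- (al + w + be)), (al + w); repeat split; auto with subgroup; gnorm.
    + mem_as (- al + (al + w)).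
  - intros [(p & s & Hpx & [(y1 & a1 & Hy1 & Ha1 & Hs1) Hs] & Hw) Hwa].
    exists (a1 + - w), (- s); repeat split; auto with subgroup.
    + mem_as (- y1) by (rewrite Hw, Hs1; gnorm).
    + mem_as p by (rewrite Hw; gnorm).
Qed.

Lemma GammaE_z_b : seq_set (Gamma x a y b b) (ssum (smeet (ssum a (smeet y b)) x) b).
Proof.
  intro w; split.
  - intros (al & be & Ha & Hb & Hy & Hz & Hx).
    exists (w + be), (- be); repeat split; auto with subgroup; [|gnorm].
    exists (- al), (al + w + be); repeat split; auto with subgroup; gnorm.
  - intros (p & s & [(a1 & t & Ha1 & [Hty Htb] & Hp) Hpx] & Hs & Hw).
    exists (- a1), (- s); repeat split; auto with subgroup.
    + mem_as t by (rewrite Hw, Hp; gnorm).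
    + mem_as (t + s) by (rewrite Hw, Hp; gnorm).
    + mem_as p by (rewrite Hw; gnorm).
Qed.

Lemma GammaE_z_b' : seq_set (Gamma x a y b b) (ssum (smeet a (ssum x (smeet y b))) b).
Proof.
  intro w; split.
  - intros (al & be & Ha & Hb & Hy & Hz & Hx).
    (* [al + w + be] lies in [b] as well as in [y]. *)
    exists (- al), (al + w); repeat split; auto with subgroup; [|gnorm].
    exists (w + be), (- (al + w + be)); repeat split; auto with subgroup; gnorm.
  - intros (u & s & [Hua (p & t & Hpx & [Hty Htb] & Hu)] & Hs & Hw).
    exists (- u), (- (t + s)); repeat split; auto with subgroup.
    + mem_as (- t) by (rewrite Hw; gnorm).
    + mem_as s by (rewrite Hw; gnorm).
    + mem_as p by (rewrite Hw, Hu; gnorm).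
Qed.
End Gamma.

Theorem theorem10p1 (G : Group) (x a y b z : gset G) :
  is_subgroup x -> is_subgroup a -> is_subgroup y -> is_subgroup b -> is_subgroup z ->
  (* (1) *)
  (seq_set (Gamma x a x b z) (smeet (ssum (smeet x a) z) (ssum x b)) /\
   seq_set (smeet (ssum (smeet x a) z) (ssum x b)) (ssum (smeet x a) (smeet z (ssum x b)))) /\
  (* (2) *)
  (seq_set (Gamma x a y b a) (smeet (ssum (smeet x (ssum a y)) b) a) /\
   seq_set (smeet (ssum (smeet x (ssum a y)) b) a) (smeet (ssum x (smeet (ssum y a) b)) a)) /\
  (* (3) *)
  (seq_set (Gamma x a y b b) (ssum (smeet (ssum a (smeet y b)) x) b) /\
   seq_set (ssum (smeet (ssum a (smeet y b)) x) b) (ssum (smeet a (ssum x (smeet y b))) b)) /\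
  (* particular cases *)
  seq_set (Gamma x a x b x) x /\
  seq_set (Gamma a a y b b) (ssum a b) /\
  seq_set (Gamma b a y b a) (smeet a b).
Proof.
  intros sx sa sy sb _.
  refine (conj (conj _ _) (conj (conj _ _) (conj (conj _ _) (conj _ (conj _ _))))).
  - exact (GammaE_y_x x a b z sx sa sb).
  - apply ssum_smeet_modular; intros u v [Hux _]; exact (ssum_translate_l _ _ _ _ sx Hux).
  - exact (GammaE_z_a x a y b sa sb).
  - rewrite <- (GammaE_z_a x a y b sa sb); exact (GammaE_z_a' x a y b sa sy sb).
  - exact (GammaE_z_b x a y b sa sb).
  - rewrite <- (GammaE_z_b x a y b sa sb); exact (GammaE_z_b' x a y b sa sy sb).
  - rewrite (GammaE_y_x x a b x sx sa sb), (ssum_idPr _ _ sx), smeet_idPl.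
    1: reflexivity.
    all: auto with subgroup.
    now intros w [].
  - rewrite (GammaE_z_b a a y b sa sb), smeet_comm, smeet_idPl; [reflexivity |].
    auto with subgroup.
  - rewrite (GammaE_z_a b a y b sa sb), (ssum_idPr _ _ sb), smeet_comm.
    1: reflexivity.
    all: auto with subgroup.
    now intros w [].
Qed.
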